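(* Consider the multi-market oligopoly of equal capacity $\mathcal{G}$ described in the context, and suppose: each $u_x$ ($x\in E$) is concave and differentiable; $c$ is convex and differentiable; and at least one of the following holds: (a) all but at most one of the $u_x$ are strictly concave, or (b) $c$ is strictly convex. Then every pure-strategy Nash equilibrium $\mathbf{S}^*=(\mathbf{s}_i^* )_{i=1}^n$ of $\mathcal{G}$ is symmetric, i.e. $\mathbf{s}_i^*=\mathbf{s}_j^*$ for all $i,j\in N$.
   Context: Let $N=\{1,\dots,n\}$ be a set of firms (players) and $E=\{1,\dots,m\}$ a set of markets. Let $\Delta^{m-1}=\{\mathbf{v}\in\mathbb{R}^m:\mathbf{v}\ge 0,\ \mathbf{v}^{T}\mathbf{1}=1\}$. Each firm $i$ chooses a strategy $\mathbf{s}_i=(s_{ix})_{x=1}^m\in S_i=\Delta^{m-1}$. For each market $x$ let $u_x:\mathbb{R}_{\ge 0}\to\mathbb{R}_{\ge 0}$ with $u_x(0)=0$, and let $p_x(t)=u_x(t)/t$ for $t>0$. Let $c:\Delta^{m-1}\to\mathbb{R}_{\ge 0}$ be a common cost function. For a strategy profile $\mathbf{S}=(\mathbf{s}_i)_{i=1}^n$ put $s_x=\sum_{i=1}^n s_{ix}$ and $\mathbf{s}_{-i}=\sum_{j\ne i}\mathbf{s}_j$. The payoff of player $i$ is $u_i(\mathbf{s}_i;\mathbf{s}_{-i})=\sum_{x=1}^m p_x(s_x)s_{ix}-c(\mathbf{s}_i)$ (a term with $s_x=0$ is taken to be $0$). The game is $\mathcal{G}=(N,S,(u_i)_{i=1}^n)$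 with $S=\prod_{i=1}^n\Delta^{m-1}$. *)

From HB Require Import structures.
From mathcomp Require Import all_boot all_order all_algebra.
From mathcomp Require Import all_classical all_reals all_analysis.
Set Implicit Arguments. Unset Strict Implicit. Unset Printing Implicit Defensive.
Import Order.TTheory GRing.Theory Num.Theory.
Import numFieldNormedType.Exports.
Local Open Scope ring_scope.
Local Open Scope classical_set_scope.

Section Game.
Variable R : realType.

Definition in_simplex (m : nat) (v : 'rV[R]_m) : Prop :=
  (forall x : 'I_m, 0 <= v 0 x) /\ \sum_(x < m) v 0 x = 1.

Definition concave_nonneg (f : R -> R) : Prop :=
  forall a b t : R, 0 <= a -> 0 <= b -> 0 <= t -> t <= 1 ->
    t * f a + (1 - t) * f b <= f (t * a + (1 - t) * b).
Definition strictly_concave_nonneg (f : R -> R) : Prop :=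
  forall a b t : R, 0 <= a -> 0 <= b -> a != b -> 0 < t -> t < 1 ->
    t * f a + (1 - t) * f b < f (t * a + (1 - t) * b).

(* Differentiability of f on its domain [0, +oo): derivable at every t > 0,
   right-differentiable at 0. *)
Definition differentiable_nonneg (f : R -> R) : Prop :=
  (forall t : R, 0 < t -> derivable f t 1) /\
  cvg ((fun h : R => h^-1 * (f h - f 0)) @ 0^'+).

Definition convex_simplex (m : nat) (c : 'rV[R]_m -> R) : Prop :=
  forall (a b : 'rV[R]_m) (t : R), in_simplex a -> in_simplex b ->
    0 <= t -> t <= 1 ->
    c (t *: a + (1 - t) *: b) <= t * c a + (1 - t) * c b.
Definition strictly_convex_simplex (m : nat) (c : 'rV[R]_m -> R) : Prop :=
  forall (a b : 'rV[R]_m) (t : R), in_simplex a -> in_simplex b ->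
    a != b -> 0 < t -> t < 1 ->
    c (t *: a + (1 - t) *: b) < t * c a + (1 - t) * c b.

(* Total load on market x under profile S (rows = firms). *)
Definition load (n m : nat) (S : 'M[R]_(n, m)) (x : 'I_m) : R :=
  \sum_(i < n) S i x.

Definition price (f : R -> R) (t : R) : R := f t / t.

(* Payoff of firm i; a term with s_x = 0 is 0. *)
Definition payoff (n m : nat) (u : 'I_m -> R -> R) (c : 'rV[R]_m -> R)
    (S : 'M[R]_(n, m)) (i : 'I_n) : R :=
  \sum_(x < m) (if load S x == 0 then 0 else price (u x) (load S x) * S i x)
  - c (row i S).

Definition deviate (n m : nat) (S : 'M[R]_(n, m)) (i : 'I_n) (s : 'rV[R]_m)
    : 'M[R]_(n, m) :=
  \matrix_(j, x) (if j == i then s 0 x else S j x).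

Definition is_pure_NE (n m : nat) (u : 'I_m -> R -> R) (c : 'rV[R]_m -> R)
    (S : 'M[R]_(n, m)) : Prop :=
  (forall i : 'I_n, in_simplex (row i S)) /\
  forall (i : 'I_n) (s : 'rV[R]_m), in_simplex s ->
    payoff u c (deviate S i s) i <= payoff u c S i.

End Game.

(* Suppose firms i and j play different strategies s_i and s_j at an equilibrium,
   and let each move a fraction e of the way towards the other's strategy.
   Neither deviation pays, while by convexity the two costs change by at most
   2e (2 c((s_i + s_j)/2) - c(s_i) - c(s_j)) <= 0 in total.  Divided by e, the
   joint revenue change tends, market by market, to -(s_jx - s_ix)^2 p_x'(t_x)
   where t_x is the load of x, and concavity of u_x with u_x(0) = 0 gives
   -p_x'(t) >= (2 u_x(t/2) - u_x(t)) / t^2 >= 0.  Hence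
     sum_x (s_jx - s_ix)^2 (2 u_x(t_x/2) - u_x(t_x)) / t_x^2
       <= 2 (2 c((s_i + s_j)/2) - c(s_i) - c(s_j)) <= 0,
   and either strictness hypothesis makes one side strict: two distinct points
   of the simplex differ in at least two coordinates, so in some market with
   s_ix <> s_jx the revenue u_x is strictly concave. *)

From HB Require Import structures.
From mathcomp Require Import all_boot all_order all_algebra.
From mathcomp Require Import all_classical all_reals all_analysis.
From mathcomp Require Import ring lra.
Import Order.TTheory GRing.Theory Num.Theory.
Import numFieldNormedType.Exports.
Set Implicit Arguments.
Unset Strict Implicit.
Unset Printing Implicit Defensive.
Local Open Scope ring_scope.
Local Open Scope classical_set_scope.

Section PriceFunction.
Variable R : realType.
Implicit Types (u p : R -> R) (a b d t h : R).

Lemma derive_dirE p t d : differentiable p t -> 'D_d p t = d * 'D_1 p t.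
Proof. by move=> dp; rewrite !deriveE // -[in LHS](mulr1 d) linearZ. Qed.

Lemma derive_dir_cvg_right p t d : differentiable p t ->
  (p (t + h * d) - p t) / h @[h --> 0^'+] --> d * 'D_1 p t.
Proof.
move=> dp; rewrite -derive_dirE //; apply: cvg_dnbhs_at_right.
have -> : (fun h => (p (t + h * d) - p t) / h) =
          (fun h => h^-1 *: ((p \o shift t) (h *: d) - p t)).
  by apply/funext => h; rewrite /= mulrC [_ *: d + t]addrC.
exact: diff_derivable.
Qed.

Lemma differentiable_price u t : differentiable_nonneg u -> 0 < t ->
  differentiable (price u) t.
Proof.
move=> [du _] t0; apply/derivable1_diffP.
have -> : price u = u * (fun s => s^-1) by apply/funext.
by apply: derivableM; [exact: du | apply: derivableV; rewrite ?gt_eqF].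
Qed.

Definition midpoint_defect u t := (2 * u (t / 2) - u t) / t ^+ 2.

Lemma concave_nonneg_half u t : concave_nonneg u -> u 0 = 0 -> 0 <= t ->
  u t <= 2 * u (t / 2).
Proof.
move=> uc u0 t0; have := uc t 0 2^-1 t0 (lexx 0) ltac:(lra) ltac:(lra).
rewrite u0 !mulr0 !addr0 [t / 2]mulrC; lra.
Qed.

Lemma strictly_concave_nonneg_half u t : strictly_concave_nonneg u -> u 0 = 0 ->
  0 < t -> u t < 2 * u (t / 2).
Proof.
move=> uc u0 t0.
have := uc t 0 2^-1 (ltW t0) (lexx 0) (lt0r_neq0 t0) ltac:(lra) ltac:(lra).
rewrite u0 !mulr0 !addr0 [t / 2]mulrC; lra.
Qed.

Lemma midpoint_defect_ge0 u t : concave_nonneg u -> u 0 = 0 -> 0 <= t ->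
  0 <= midpoint_defect u t.
Proof.
move=> uc u0 t0; apply: divr_ge0; last exact: sqr_ge0.
by rewrite subr_ge0 concave_nonneg_half.
Qed.

Lemma midpoint_defect_gt0 u t : strictly_concave_nonneg u -> u 0 = 0 -> 0 < t ->
  0 < midpoint_defect u t.
Proof.
move=> uc u0 t0; apply: divr_gt0; last exact: exprn_gt0.
by rewrite subr_gt0 strictly_concave_nonneg_half.
Qed.

Lemma price_decrement_ge u t h : concave_nonneg u -> u 0 = 0 -> 0 < t -> 0 < h ->
  h <= t / 2 -> midpoint_defect u t <= (price u (t - h) - price u t) / h.
Proof.
move=> uc u0 t0 h0 ht; rewrite /midpoint_defect.
set G := 2 * u (t / 2) - u t; set s := t - h.
have G0 : 0 <= G by rewrite subr_ge0 concave_nonneg_half // ltW.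
have s0 : 0 < s by rewrite /s; lra.
have st : s <= t by rewrite /s; lra.
have conc : 2 * h / t * u (t / 2) + (1 - 2 * h / t) * u t <= u s.
  have l0 : 0 <= 2 * h / t by rewrite divr_ge0 //; lra.
  have l1 : 2 * h / t <= 1 by rewrite ler_pdivrMr //; lra.
  have := uc (t / 2) t (2 * h / t) ltac:(lra) ltac:(lra) l0 l1.
  suff -> : 2 * h / t * (t / 2) + (1 - 2 * h / t) * t = s by [].
  by rewrite /s; field; rewrite gt_eqF.
have key : h * G <= t * u s - s * u t.
  move: conc; rewrite -(ler_pM2l t0).
  have -> : t * (2 * h / t * u (t / 2) + (1 - 2 * h / t) * u t) =
            2 * h * u (t / 2) + (t - 2 * h) * u t by field; rewrite gt_eqF.
  rewrite /G /s; lra.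
have -> : (price u s - price u t) / h = (t * u s - s * u t) / (s * t * h).
  by rewrite /price; field; rewrite !gt_eqF.
apply: (@le_trans _ _ (G / (s * t))).
  apply: (ler_wpM2l G0); rewrite lef_pV2 ?posrE ?mulr_gt0 ?exprn_gt0 // expr2.
  exact: (ler_wpM2r (ltW t0) st).
have -> : G / (s * t) = h * G / (s * t * h) by field; rewrite !gt_eqF.
by apply: (ler_wpM2r _ key); rewrite invr_ge0 !mulr_ge0 // ltW.
Qed.

Lemma derive_price_le u t : concave_nonneg u -> u 0 = 0 ->
  differentiable_nonneg u -> 0 < t -> 'D_1 (price u) t <= - midpoint_defect u t.
Proof.
move=> uc u0 du t0; rewrite lerNr -mulN1r.
apply: cvgr_to_ge (derive_dir_cvg_right (d := -1) (differentiable_price du t0)) _.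
near=> h; rewrite mulrN1; apply: price_decrement_ge => //.
by near: h; apply: nbhs_right_le; rewrite divr_gt0.
Unshelve. all: end_near.
Qed.

Lemma affine_cvg_right a d : a + e * d @[e --> 0^'+] --> a.
Proof.
apply: cvg_at_right_filter.
have : a + e * d @[e --> 0] --> a + 0 * d.
  by apply: cvgD; [exact: cvg_cst | apply: cvgMr_tmp; exact: cvg_id].
by rewrite mul0r addr0.
Qed.

(* Sum of the revenue changes, divided by e, of two firms with shares a and b of
   a market with load t when each in turn unilaterally moves the fraction e of
   the way towards the other's share. *)
Definition exchange_gain p a b t e :=
  (p (t + e * (b - a)) * (a + e * (b - a)) - p t * a
   + (p (t + e * (a - b)) * (b + e * (a - b)) - p t * b)) / e.

Lemma exchange_gain_cvg p a b t : differentiable p t ->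
  exchange_gain p a b t e @[e --> 0^'+] --> - (b - a) ^+ 2 * 'D_1 p t.
Proof.
move=> dp; set d := b - a.
have -> : exchange_gain p a b t = fun e =>
    (a + e * d) * ((p (t + e * d) - p t) / e)
    + (b + e * - d) * ((p (t + e * - d) - p t) / e).
  apply/funext => e; rewrite /exchange_gain -[a - b]opprB -/d.
  have [->|e0] := eqVneq e 0; first by rewrite !invr0 !mulr0 addr0.
  by field.
have -> : - d ^+ 2 * 'D_1 p t = a * (d * 'D_1 p t) + b * (- d * 'D_1 p t).
  by rewrite /d; ring.
by apply: cvgD; apply: cvgM;
  [exact: affine_cvg_right | exact: derive_dir_cvg_right
  |exact: affine_cvg_right | exact: derive_dir_cvg_right].
Qed.

Lemma sum_gt0_of_neq a b t : 0 <= a -> 0 <= b -> a + b <= t -> a != b -> 0 < t.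
Proof. by move=> a0 b0 abt; rewrite neq_lt => /orP[]; lra. Qed.

Lemma exchange_gain_price_cvg u a b t : differentiable_nonneg u ->
  0 <= a -> 0 <= b -> a + b <= t ->
  exchange_gain (price u) a b t e @[e --> 0^'+] --> - (b - a) ^+ 2 * 'D_1 (price u) t.
Proof.
move=> du a0 b0 abt; have [<-|ab] := eqVneq a b.
  have -> : exchange_gain (price u) a a t = fun=> 0.
    apply/funext => e.
    by rewrite /exchange_gain subrr !(mulr0, addr0, subr0, subrr, mul0r).
  by rewrite subrr expr0n /= oppr0 mul0r; exact: cvg_cst.
exact/exchange_gain_cvg/differentiable_price/(sum_gt0_of_neq a0 b0 abt).
Qed.

Lemma exchange_limit_ge u a b t : concave_nonneg u -> u 0 = 0 ->
  differentiable_nonneg u -> 0 <= a -> 0 <= b -> a + b <= t ->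
  (b - a) ^+ 2 * midpoint_defect u t <= - (b - a) ^+ 2 * 'D_1 (price u) t.
Proof.
move=> uc u0 du a0 b0 abt; have [->|ab] := eqVneq a b.
  by rewrite subrr expr0n /= oppr0 !mul0r.
rewrite mulNr -mulrN; apply: (ler_wpM2l (sqr_ge0 _)).
by rewrite lerNr derive_price_le // (sum_gt0_of_neq a0 b0 abt).
Qed.

End PriceFunction.

Section Simplex.
Variables (R : realType) (m : nat).
Implicit Types (a b : 'rV[R]_m) (c : 'rV[R]_m -> R).

Lemma in_simplex_comb a b t : in_simplex a -> in_simplex b -> 0 <= t -> t <= 1 ->
  in_simplex (t *: a + (1 - t) *: b).
Proof.
move=> [a0 a1] [b0 b1] t0 t1; split.
  by move=> x; rewrite !mxE addr_ge0 // mulr_ge0 // subr_ge0.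
under eq_bigr do rewrite !mxE.
by rewrite big_split /= -!mulr_sumr a1 b1 !mulr1 subrKC.
Qed.

Lemma in_simplex_mid a b : in_simplex a -> in_simplex b -> in_simplex (2^-1 *: (a + b)).
Proof.
move=> sa sb; have -> : 2^-1 *: (a + b) = 2^-1 *: a + (1 - 2^-1) *: b.
  by apply/rowP => x; rewrite !mxE; field.
by apply: in_simplex_comb => //; lra.
Qed.

Lemma convex_simplex_mid c a b : convex_simplex c -> in_simplex a -> in_simplex b ->
  2 * c (2^-1 *: (a + b)) <= c a + c b.
Proof.
move=> cc sa sb; have := cc a b 2^-1 sa sb ltac:(lra) ltac:(lra).
have -> : 2^-1 *: a + (1 - 2^-1) *: b = 2^-1 *: (a + b).
  by apply/rowP => x; rewrite !mxE; field.
lra.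
Qed.

Lemma strictly_convex_simplex_mid c a b : strictly_convex_simplex c ->
  in_simplex a -> in_simplex b -> a != b -> 2 * c (2^-1 *: (a + b)) < c a + c b.
Proof.
move=> cc sa sb ab; have := cc a b 2^-1 sa sb ab ltac:(lra) ltac:(lra).
have -> : 2^-1 *: a + (1 - 2^-1) *: b = 2^-1 *: (a + b).
  by apply/rowP => x; rewrite !mxE; field.
lra.
Qed.

Lemma convex_simplex_toward c a b e : convex_simplex c -> in_simplex a -> in_simplex b ->
  0 <= e -> e <= 2^-1 ->
  c (a + e *: (b - a)) <= 2 * e * c (2^-1 *: (a + b)) + (1 - 2 * e) * c a.
Proof.
move=> cc sa sb e0 e1.
have := cc _ _ (2 * e) (in_simplex_mid sa sb) sa ltac:(lra) ltac:(lra).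
suff -> : (2 * e) *: (2^-1 *: (a + b)) + (1 - 2 * e) *: a = a + e *: (b - a) by [].
by apply/rowP => x; rewrite !mxE; field.
Qed.

Lemma in_simplex_toward a b e : in_simplex a -> in_simplex b -> 0 <= e -> e <= 1 ->
  in_simplex (a + e *: (b - a)).
Proof.
move=> sa sb e0 e1; have -> : a + e *: (b - a) = e *: b + (1 - e) *: a.
  by apply/rowP => x; rewrite !mxE; ring.
exact: in_simplex_comb.
Qed.

Lemma in_simplex_neq_avoid a b x0 : in_simplex a -> in_simplex b -> a != b ->
  exists2 x, x != x0 & a 0 x != b 0 x.
Proof.
move=> [_ a1] [_ b1] ab.
case: (pselect (exists2 x, x != x0 & a 0 x != b 0 x)) => // noff; exfalso.
have eq_off x : x != x0 -> a 0 x = b 0 x.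
  by move=> xx0; apply/eqP; apply: contra_notT noff => abx; exists x.
move/eqP: ab; apply; apply/rowP => x.
have [->|] := eqVneq x x0; last exact: eq_off.
have : \sum_(y < m) a 0 y = \sum_(y < m) b 0 y by rewrite a1 b1.
rewrite (bigD1 x0) //= [in RHS](bigD1 x0) //=.
by under eq_bigr => y yx0 do rewrite eq_off //; move/addIr.
Qed.

End Simplex.

Section Game.
Variables (R : realType) (n m : nat) (u : 'I_m -> R -> R) (c : 'rV[R]_m -> R).
Hypothesis u_0 : forall x, u x 0 = 0.
Implicit Types (S : 'M[R]_(n, m)) (s : 'rV[R]_m).

Lemma payoffE S i :
  payoff u c S i = \sum_(x < m) price (u x) (load S x) * S i x - c (row i S).
Proof.
congr (_ - _); apply: eq_bigr => x _.
by case: eqP => // ->; rewrite /price u_0 !mul0r.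
Qed.

Lemma load_deviate S i s x : load (deviate S i s) x = load S x - S i x + s 0 x.
Proof.
rewrite /load (bigD1 i) //= [X in _ = X - _ + _](bigD1 i) //= !mxE eqxx.
rewrite (eq_bigr (fun k => S k x)); last by move=> k /negbTE ki; rewrite !mxE ki.
ring.
Qed.

Lemma payoff_deviate S i s : payoff u c (deviate S i s) i =
  \sum_(x < m) price (u x) (load S x - S i x + s 0 x) * s 0 x - c s.
Proof.
rewrite payoffE; congr (_ - c _); last by apply/rowP => x; rewrite !mxE eqxx.
by apply: eq_bigr => x _; rewrite load_deviate !mxE eqxx.
Qed.

Lemma load_ge_pair S i j x : i != j -> (forall k, 0 <= S k x) ->
  S i x + S j x <= load S x.
Proof.
move=> ij S0; rewrite /load (bigD1 i) //= (bigD1 j) 1?eq_sym //= addrA lerDl.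
by apply: sumr_ge0 => k _; exact: S0.
Qed.

Lemma payoff_deviate_toward S i j e :
  payoff u c (deviate S i (row i S + e *: (row j S - row i S))) i =
  \sum_(x < m) price (u x) (load S x + e * (S j x - S i x))
                * (S i x + e * (S j x - S i x))
  - c (row i S + e *: (row j S - row i S)).
Proof.
rewrite payoff_deviate; congr (_ - _); apply: eq_bigr => x _; rewrite !mxE.
by congr (price _ _ * _); ring.
Qed.

Lemma pure_NE_entry_ge0 S : is_pure_NE u c S -> forall k x, 0 <= S k x.
Proof. by case=> simS _ k x; have [/(_ x)] := simS k; rewrite mxE. Qed.

Lemma NE_exchange_gain_le S i j e : convex_simplex c -> is_pure_NE u c S ->
  i != j -> 0 < e -> e <= 2^-1 ->
  \sum_(x < m) exchange_gain (price (u x)) (S i x) (S j x) (load S x) e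
    <= 2 * (2 * c (2^-1 *: (row i S + row j S)) - c (row i S) - c (row j S)).
Proof.
move=> cc [simS NE] ij e0 e1; have e_le1 : e <= 1 by lra.
have Ni := NE i _ (in_simplex_toward (simS i) (simS j) (ltW e0) e_le1).
have Nj := NE j _ (in_simplex_toward (simS j) (simS i) (ltW e0) e_le1).
have Ci := convex_simplex_toward cc (simS i) (simS j) (ltW e0) e1.
have Cj := convex_simplex_toward cc (simS j) (simS i) (ltW e0) e1.
rewrite !payoff_deviate_toward !payoffE in Ni Nj.
rewrite [row j S + row i S]addrC in Cj.
rewrite /exchange_gain -mulr_suml big_split /= !sumrB ler_pdivrMr //.
nra.
Qed.

Lemma NE_exchange_limit_le S i j : convex_simplex c -> is_pure_NE u c S -> i != j ->
  (forall x, differentiable_nonneg (u x)) ->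
  \sum_(x < m) - (S j x - S i x) ^+ 2 * 'D_1 (price (u x)) (load S x)
    <= 2 * (2 * c (2^-1 *: (row i S + row j S)) - c (row i S) - c (row j S)).
Proof.
move=> cc NES ij du; have S0 := pure_NE_entry_ge0 NES.
apply: cvgr_to_le
  (_ : \sum_(x < m) exchange_gain (price (u x)) (S i x) (S j x) (load S x) e
       @[e --> 0^'+] --> _) _.
  apply: cvg_big => [|x _]; first exact: add_continuous.
  exact: exchange_gain_price_cvg (du x) (S0 i x) (S0 j x) (load_ge_pair ij (S0^~ x)).
near=> e; apply: NE_exchange_gain_le => //.
by near: e; apply: nbhs_right_le; rewrite invr_gt0.
Unshelve. all: end_near.
Qed.

Lemma NE_midpoint_defect_le S i j : convex_simplex c -> is_pure_NE u c S -> i != j ->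
  (forall x, concave_nonneg (u x)) -> (forall x, differentiable_nonneg (u x)) ->
  \sum_(x < m) (S j x - S i x) ^+ 2 * midpoint_defect (u x) (load S x)
    <= 2 * (2 * c (2^-1 *: (row i S + row j S)) - c (row i S) - c (row j S)).
Proof.
move=> cc NES ij uc du; have S0 := pure_NE_entry_ge0 NES.
apply: le_trans (NE_exchange_limit_le cc NES ij du); apply: ler_sum => x _.
exact: exchange_limit_ge (uc x) (u_0 x) (du x) (S0 i x) (S0 j x)
                         (load_ge_pair ij (S0^~ x)).
Qed.

End Game.

Theorem proposition3 (R : realType) (n m : nat)
  (u : 'I_m -> R -> R) (c : 'rV[R]_m -> R)
  (u_nonneg : forall (x : 'I_m) (t : R), 0 <= t -> 0 <= u x t)
  (u_0 : forall x : 'I_m, u x 0 = 0)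
  (u_concave : forall x : 'I_m, concave_nonneg (u x))
  (u_diff : forall x : 'I_m, differentiable_nonneg (u x))
  (c_nonneg : forall v : 'rV[R]_m, in_simplex v -> 0 <= c v)
  (c_convex : convex_simplex c)
  (c_diff : forall v : 'rV[R]_m, in_simplex v -> differentiable c v)
  (strict : (exists x0 : 'I_m, forall x : 'I_m, x != x0 ->
               strictly_concave_nonneg (u x))
            \/ strictly_convex_simplex c)
  (S : 'M[R]_(n, m)) :
  is_pure_NE u c S -> forall i j : 'I_n, row i S = row j S.
Proof.
move=> NES i j; have [//|neq] := eqVneq (row i S) (row j S); exfalso.
have ij : i != j by apply: contraNneq neq => ->.
have [simS _] := NES; have S0 := pure_NE_entry_ge0 NES.
have load_ge x := load_ge_pair ij (S0^~ x).
pose gap x := (S j x - S i x) ^+ 2 * midpoint_defect (u x) (load S x).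
have gap_ge0 x : 0 <= gap x.
  rewrite mulr_ge0 ?sqr_ge0 // midpoint_defect_ge0 //.
  by rewrite (le_trans _ (load_ge x)) ?addr_ge0.
have gap_le := NE_midpoint_defect_le u_0 c_convex NES ij u_concave u_diff.
have mid_le := convex_simplex_mid c_convex (simS i) (simS j).
case: strict => [[x0 strict_u] | strict_c].
- have [x xx0] := in_simplex_neq_avoid x0 (simS i) (simS j) neq; rewrite !mxE => abx.
  have gap_gt0 : 0 < gap x.
    apply: mulr_gt0; first by rewrite exprn_even_gt0 //= subr_eq0 eq_sym.
    exact: midpoint_defect_gt0 (strict_u x xx0) (u_0 x)
                               (sum_gt0_of_neq (S0 i x) (S0 j x) (load_ge x) abx).
  have : 0 < \sum_(x < m) gap x.
    by rewrite (bigD1 x) //=; apply: ltr_pwDl gap_gt0 _; apply: sumr_ge0.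
  lra.
- have := strictly_convex_simplex_mid strict_c (simS i) (simS j) neq.
  have : 0 <= \sum_(x < m) gap x by apply: sumr_ge0.
  lra.
Qed.
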